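(* Let $\mathbf{T}\in\{0,1\}^{n\times\ell}$ be a matrix with $\delta(\mathbf{T})\le 3$ and $|\mathcal{T}_3|\ge 5$. Then there exist $j_1\ne j_2\in[\ell]$ such that: $T_1\subseteq\{j_1,j_2\}$ for each $T_1\in\mathcal{T}_1$; $T_2\cap\{j_1,j_2\}\ne\emptyset$ for each $T_2\in\mathcal{T}_2$; and $\{j_1,j_2\}\subseteq T_3$ for each $T_3\in\mathcal{T}_3$. Moreover, with $\mathcal{T}_2'=\{T_2\in\mathcal{T}_2: j_1\in T_2,\ j_2\notin T_2\}$ and $\mathcal{T}_2''=\{T_2\in\mathcal{T}_2: j_1\notin T_2,\ j_2\in T_2\}$, exactly one of the following holds: (a) $\mathcal{T}_2'=\emptyset$ or $\mathcal{T}_2''=\emptyset$; (b) there is $j_3\in[\ell]$ with $\mathcal{T}_2'=\{\{j_1,j_3\}\}$ and $\mathcal{T}_2''=\{\{j_2,j_3\}\}$.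
   Context: For rows $u,w\in\{0,1\}^\ell$, $D(u,w)=\{j:u[j]\ne w[j]\}$ and $d(u,w)=|D(u,w)|$; $\delta(\mathbf{T})=\max_{i\ne i'}d(\mathbf{T}[i],\mathbf{T}[i'])$, where $\mathbf{T}[i]$ is the $i$-th row. For $x\in\mathbb{N}$, $\mathcal{T}_x$ is the set system (without duplicates) $\{D(\mathbf{T}[i],\mathbf{T}[n]): i\in[n-1],\ d(\mathbf{T}[i],\mathbf{T}[n])=x\}$. *)

From mathcomp Require Import all_boot all_order all_algebra.
Set Implicit Arguments. Unset Strict Implicit. Unset Printing Implicit Defensive.

Definition Dset (l : nat) (u w : 'rV[bool]_l) : {set 'I_l} :=
  [set j | u ord0 j != w ord0 j].

Definition dist (l : nat) (u w : 'rV[bool]_l) : nat := #|Dset u w|.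

(* delta(T) = max over i <> i' of d(T[i], T[i']) (0 if fewer than 2 rows) *)
Definition delta (m l : nat) (T : 'M[bool]_(m, l)) : nat :=
  \max_(i : 'I_m) \max_(i' : 'I_m | i != i') dist (row i T) (row i' T).

(* T_x = { D(T[i], T[last]) : i a non-last row, d(T[i], T[last]) = x },
   for a matrix with n.+1 rows (the last row is ord_max). *)
Definition Tsys (n l : nat) (T : 'M[bool]_(n.+1, l)) (x : nat) : {set {set 'I_l}} :=
  [set Dset (row i T) (row ord_max T) |
     i in [pred i : 'I_n.+1 | (i != ord_max) && (dist (row i T) (row ord_max T) == x)]].

(** Members of [Tsys T x] are [x]-sets and any two of them differ in at most
    [delta T <= 3] points, so an [x]-set and a [y]-set share at least
    [(x + y - 3) / 2] points.  Hence the 3-sets pairwise meet in two points;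
    such a family either has a common pair [{j1, j2}] or lies inside a 4-set,
    which holds at most four 3-sets.  Every 3-set is then [w |: {j1, j2}] for
    a point [w] it shares with any given 1- or 2-set avoiding [{j1, j2}], so
    such a set would leave room for at most two 3-sets.  Finally a 2-set
    through [j1] only and one through [j2] only must share a third point
    [j3], which pins both classes down to singletons. *)

From mathcomp Require Import all_boot all_order all_algebra.
From mathcomp Require Import zify.
Set Implicit Arguments. Unset Strict Implicit. Unset Printing Implicit Defensive.

Section FinsetCardinality.
Variable T : finType.
Implicit Types A B C P X : {set T}.

Lemma subset_card_eq A B : A \subset B -> #|B| <= #|A| -> A = B.
Proof. by move=> sAB leBA; apply/eqP; rewrite eqEcard sAB leBA. Qed.

Lemma card_setI_lt A B : ~~ (A \subset B) -> #|A :&: B| < #|A|.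
Proof.
move=> nsAB; apply: proper_card; rewrite properEneq subsetIl andbT.
by apply: contraNneq nsAB => /setIidPl.
Qed.

Lemma card_symdiff A B :
  #|(A :|: B) :\: (A :&: B)| + 2 * #|A :&: B| = #|A| + #|B|.
Proof.
have sIU : A :&: B \subset A :|: B by rewrite subIset ?subsetUl.
rewrite cardsD (setIidPr sIU) -cardsUI; have := subset_leq_card sIU; lia.
Qed.

Lemma set2_card2 X a b : #|X| = 2 -> a \in X -> b \in X -> a != b ->
  X = [set a; b].
Proof.
move=> cX aX bX neq_ab; symmetry; apply: subset_card_eq.
  by rewrite subUset !sub1set aX bX.
by rewrite cards2 neq_ab cX.
Qed.

Lemma setU1_card3 C P w : #|C| = 3 -> #|P| = 2 -> P \subset C ->
  w \in C -> w \notin P -> C = w |: P.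
Proof.
move=> cC cP sPC wC wNP; symmetry; apply: subset_card_eq.
  by rewrite subUset sub1set wC sPC.
by rewrite cardsU1 wNP cP cC.
Qed.

Lemma set2_inj_r (a b c : T) : b != a -> [set a; b] = [set a; c] -> b = c.
Proof.
move=> neq_ba eq_abc; have : b \in [set a; c] by rewrite -eq_abc set22.
by rewrite !inE (negbTE neq_ba) => /eqP.
Qed.

End FinsetCardinality.

Section TriplesMeetingInPairs.
Variables (T : finType) (S : {set {set T}}).
Hypothesis card_S : {in S, forall C : {set T}, #|C| = 3}.
Hypothesis meet_S : {in S &, forall C D : {set T}, 2 <= #|C :&: D|}.

Section TwoMembers.
Variables A B : {set T}.
Hypotheses (SA : A \in S) (SB : B \in S) (neq_AB : A != B).

Lemma card_setI_members : #|A :&: B| = 2.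
Proof.
have nsAB : ~~ (A \subset B).
  apply: contra neq_AB => sAB; apply/eqP/subset_card_eq => //.
  by rewrite (card_S SA) (card_S SB).
have := card_setI_lt nsAB; have := meet_S SA SB; rewrite (card_S SA); lia.
Qed.

Lemma card_setU_members : #|A :|: B| = 4.
Proof.
have := cardsUI A B; rewrite card_setI_members (card_S SA) (card_S SB); lia.
Qed.

Lemma sub_setU_or_sup_setI D : D \in S ->
  (D \subset A :|: B) || (A :&: B \subset D).
Proof.
(* [#|D :&: A| + #|D :&: B|] is at least 4 and equals
   [#|D :&: (A :|: B)| + #|D :&: (A :&: B)|]. *)
move=> SD; apply: contraT; rewrite negb_or => /andP[nsDU nsPD].
have := cardsUI (D :&: A) (D :&: B); rewrite -setIUr -setIIr.
have := card_setI_lt nsDU; have := card_setI_lt nsPD; rewrite [_ :&: D]setIC.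
have := meet_S SD SA; have := meet_S SD SB.
by rewrite (card_S SD) card_setI_members; lia.
Qed.

(* A member [C0] missing a point of [A :&: B] lies in the 4-set [A :|: B];
   a member [D] sticking out of [A :|: B] would then meet [C0] only inside
   [A :&: B], hence in at most one point. *)
Lemma sup_setI_or_card_le4 :
  {in S, forall C : {set T}, A :&: B \subset C} \/ #|S| <= 4.
Proof.
have [/forall_inP ? | ] := boolP [forall C in S, A :&: B \subset C].
  by left.
rewrite negb_forall_in => /exists_inP[C0 SC0 nsPC0]; right.
have sC0U : C0 \subset A :|: B.
  by have := sub_setU_or_sup_setI SC0; rewrite (negbTE nsPC0) orbF.
have sSU D : D \in S -> D \subset A :|: B.
  move=> SD; apply: contraT => nsDU.
  have sPD : A :&: B \subset D.
    by have := sub_setU_or_sup_setI SD; rewrite (negbTE nsDU).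
  have eDU : A :&: B = D :&: (A :|: B).
    apply: subset_card_eq; first by rewrite subsetI sPD subIset ?subsetUl.
    by have := card_setI_lt nsDU; rewrite (card_S SD) card_setI_members.
  have eC0D : C0 :&: D = (A :&: B) :&: C0.
    by rewrite eDU -setIA [_ :&: C0]setIC (setIidPl sC0U) setIC.
  have := meet_S SC0 SD; have := card_setI_lt nsPC0.
  by rewrite eC0D card_setI_members; lia.
rewrite -[4]/('C(4, 3)) -card_setU_members -cards_draws.
apply: subset_leq_card; apply/subsetP => D SD.
by rewrite inE sSU //= (card_S SD).
Qed.

End TwoMembers.

Lemma triples_common_pair : 4 < #|S| ->
  exists2 P : {set T}, #|P| == 2 & {in S, forall C : {set T}, P \subset C}.
Proof.
move=> S_gt4; have /card_gt1P[A [B [SA SB neq_AB]]] : 1 < #|S| by lia.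
exists (A :&: B); first by rewrite (card_setI_members SA SB neq_AB).
by case: (sup_setI_or_card_le4 SA SB neq_AB) => //; rewrite leqNgt S_gt4.
Qed.

End TriplesMeetingInPairs.

Section FamilyOfDiameterThree.
Variables (I : finType) (F : nat -> {set {set I}}).
Hypothesis card_F : forall x A, A \in F x -> #|A| = x.
(* By [card_symdiff], this says that any two members differ in at most three
   points. *)
Hypothesis meet_F : forall x y A B, A \in F x -> B \in F y ->
  x + y <= 3 + 2 * #|A :&: B|.

Lemma meet_F_neq0 x y A B : A \in F x -> B \in F y -> 3 < x + y ->
  A :&: B != set0.
Proof. by move=> FA FB; rewrite -card_gt0; have := meet_F FA FB; lia. Qed.

Lemma F3_common_pair : 4 < #|F 3| ->
  exists2 P : {set I}, #|P| == 2 & {in F 3, forall C : {set I}, P \subset C}.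
Proof.
apply: triples_common_pair; first exact: card_F.
by move=> C D FC FD; have := meet_F FC FD; lia.
Qed.

Section CommonPair.
Variables j1 j2 : I.
Hypothesis neq_j12 : j1 != j2.
Hypothesis sub_F3 : {in F 3, forall C : {set I}, [set j1; j2] \subset C}.

Lemma card_F3_le_disjoint x B : B \in F x -> 0 < x ->
  [disjoint B & [set j1; j2]] -> #|F 3| <= x.
Proof.
move=> FB x_gt0 disjBP; rewrite -(card_F FB).
apply: leq_trans (leq_imset_card (fun w => w |: [set j1; j2]) B).
apply: subset_leq_card; apply/subsetP => C FC.
have x3_gt3 : 3 < x + 3 by lia.
have /set0Pn[w] := meet_F_neq0 FB FC x3_gt3; rewrite inE => /andP[wB wC].
apply/imsetP; exists w => //; apply: setU1_card3 (card_F FC) _ (sub_F3 FC) wC _.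
  by rewrite cards2 neq_j12.
by apply: contraTN wB => wP; rewrite (disjointFl disjBP).
Qed.

Lemma F1_sub_pair : 1 < #|F 3| ->
  {in F 1, forall A : {set I}, A \subset [set j1; j2]}.
Proof.
move=> F3_gt1 A FA; have /eqP/cards1P[y eA] := card_F FA; rewrite eA sub1set.
apply: contraTT F3_gt1 => yNP; rewrite -leqNgt.
by apply: card_F3_le_disjoint FA _ _; rewrite // eA disjoints1.
Qed.

Lemma F2_meet_pair : 2 < #|F 3| ->
  {in F 2, forall B : {set I}, B :&: [set j1; j2] != set0}.
Proof.
move=> F3_gt2 B FB; apply: contraTneq F3_gt2 => /eqP disjBP; rewrite -leqNgt.
by apply: card_F3_le_disjoint FB _ _; rewrite // -setI_eq0.
Qed.

Lemma F2_crossing_pairs X Y : X \in F 2 -> Y \in F 2 ->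
  j1 \in X -> j2 \notin X -> j1 \notin Y -> j2 \in Y ->
  exists w, [/\ w != j1, w != j2, X = [set j1; w] & Y = [set j2; w]].
Proof.
move=> FX FY j1X j2NX j1NY j2Y.
have /set0Pn[w] := meet_F_neq0 FX FY (isT : 3 < 2 + 2).
rewrite inE => /andP[wX wY].
have neq_wj1 : w != j1 by apply: contraTneq wY => ->.
have neq_wj2 : w != j2 by apply: contraTneq wX => ->.
exists w; split=> //.
  by apply: set2_card2 (card_F FX) j1X wX _; rewrite eq_sym.
by apply: set2_card2 (card_F FY) j2Y wY _; rewrite eq_sym.
Qed.

Lemma F2_one_sided_or_crossed :
  let T2' := [set A in F 2 | (j1 \in A) && (j2 \notin A)] in
  let T2'' := [set A in F 2 | (j1 \notin A) && (j2 \in A)] in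
  let Pa := (T2' = set0) \/ (T2'' = set0) in
  let Pb := exists j3 : I,
              T2' = [set [set j1; j3]] /\ T2'' = [set [set j2; j3]] in
  (Pa /\ ~ Pb) \/ (~ Pa /\ Pb).
Proof.
move=> T2' T2'' Pa Pb.
have notPa_of_Pb : Pb -> ~ Pa.
  rewrite /Pa /Pb => -[j3 [-> ->]].
  by case=> [/setP/(_ [set j1; j3]) | /setP/(_ [set j2; j3])]; rewrite !inE eqxx.
suff [PaW | PbW] : Pa \/ Pb.
- by left; split=> // /notPa_of_Pb.
- by right; split=> //; apply: notPa_of_Pb.
have [T2'0 | /set0Pn[X0 T2'X0]] := eqVneq T2' set0; first by do 2 left.
have [T2''0 | /set0Pn[Y0 T2''Y0]] := eqVneq T2'' set0; first by left; right.
have crossed X Y : X \in T2' -> Y \in T2'' ->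
    exists w, [/\ w != j1, w != j2, X = [set j1; w] & Y = [set j2; w]].
  rewrite !inE => /and3P[FX j1X j2NX] /and3P[FY j1NY j2Y].
  exact: F2_crossing_pairs.
have [w [_ _ eX0 eY0]] := crossed X0 Y0 T2'X0 T2''Y0.
right; exists w; split; apply/setP => Z; rewrite in_set1.
all: apply/idP/eqP => [Z_in | ->].
- have [w' [_ neq_w'j2 -> eY0']] := crossed Z Y0 Z_in T2''Y0.
  by rewrite (set2_inj_r neq_w'j2 (etrans (esym eY0') eY0)).
- by rewrite -eX0.
- have [w' [neq_w'j1 _ eX0' ->]] := crossed X0 Z T2'X0 Z_in.
  by rewrite (set2_inj_r neq_w'j1 (etrans (esym eX0') eX0)).
- by rewrite -eY0.
Qed.

End CommonPair.

End FamilyOfDiameterThree.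

Lemma Dset_symdiff (l : nat) (u v w : 'rV[bool]_l) :
  Dset u v = (Dset u w :|: Dset v w) :\: (Dset u w :&: Dset v w).
Proof.
apply/setP => j; rewrite !inE.
by case: (u ord0 j); case: (v ord0 j); case: (w ord0 j).
Qed.

Lemma dist_le_delta (m l : nat) (T : 'M[bool]_(m, l)) (i i' : 'I_m) :
  i != i' -> dist (row i T) (row i' T) <= delta T.
Proof.
move=> neq_ii'; apply: leq_trans (leq_bigmax i).
exact: (leq_bigmax_cond (F := fun i' => dist (row i T) (row i' T)) i' neq_ii').
Qed.

Lemma card_Tsys (n l : nat) (T : 'M[bool]_(n.+1, l)) x A :
  A \in Tsys T x -> #|A| = x.
Proof. by case/imsetP => i; rewrite inE => /andP[_ /eqP <-] ->. Qed.

Lemma Tsys_meet (n l : nat) (T : 'M[bool]_(n.+1, l)) x y A B :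
  A \in Tsys T x -> B \in Tsys T y -> x + y <= delta T + 2 * #|A :&: B|.
Proof.
case/imsetP => i; rewrite inE => /andP[_ /eqP <-] ->.
case/imsetP => i'; rewrite inE => /andP[_ /eqP <-] ->.
rewrite -card_symdiff -Dset_symdiff leq_add2r.
have [<- | neq_ii'] := eqVneq i i'; last exact: dist_le_delta.
by rewrite (_ : Dset _ _ = set0) ?cards0 //; apply/setP => j; rewrite !inE eqxx.
Qed.

Theorem lemma16 (n l : nat) (T : 'M[bool]_(n.+1, l)) :
  delta T <= 3 ->
  5 <= #|Tsys T 3| ->
  exists (j1 j2 : 'I_l),
    [/\ j1 != j2,
        (forall A, A \in Tsys T 1 -> A \subset [set j1; j2]),
        (forall A, A \in Tsys T 2 -> A :&: [set j1; j2] != set0),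
        (forall A, A \in Tsys T 3 -> [set j1; j2] \subset A) &
        let T2' := [set A in Tsys T 2 | (j1 \in A) && (j2 \notin A)] in
        let T2'' := [set A in Tsys T 2 | (j1 \notin A) && (j2 \in A)] in
        let Pa := (T2' = set0) \/ (T2'' = set0) in
        let Pb := exists j3 : 'I_l,
                    T2' = [set [set j1; j3]] /\ T2'' = [set [set j2; j3]] in
        (Pa /\ ~ Pb) \/ (~ Pa /\ Pb)].
Proof.
move=> delta_le3 Tsys3_ge5.
have card_T := @card_Tsys n l T.
have meet_T x y A B : A \in Tsys T x -> B \in Tsys T y ->
    x + y <= 3 + 2 * #|A :&: B|.
  by move=> TA TB; apply: leq_trans (Tsys_meet TA TB) _; rewrite leq_add2r.
have [P /cards2P[j1 [j2 [neq_j12 ->]]] sub_T3] :=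
  F3_common_pair card_T meet_T Tsys3_ge5.
have Tsys3_gt2 : 2 < #|Tsys T 3| by apply: leq_trans Tsys3_ge5.
exists j1, j2; split=> //.
- exact: (F1_sub_pair card_T meet_T neq_j12 sub_T3 (ltnW Tsys3_gt2)).
- exact: (F2_meet_pair card_T meet_T neq_j12 sub_T3 Tsys3_gt2).
- exact: F2_one_sided_or_crossed card_T meet_T j1 j2.
Qed.
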